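(* There is a bijection between zero-dimensional tropical ideals of degree $2$ in $\mathbb{B}[x_1^{\pm1},\dots,x_n^{\pm1}]$ and proper sublattices $L\subsetneq\mathbb{Z}^n$. Under this bijection, the tropical ideal associated to $L$ is the one whose polynomials of minimal support are exactly the binomials $\mathbf x^{\mathbf u}\oplus\mathbf x^{\mathbf v}$ with $\mathbf u\neq\mathbf v$ and $\mathbf u-\mathbf v\in L$, and the trinomials $\mathbf x^{\mathbf u}\oplus\mathbf x^{\mathbf v}\oplus\mathbf x^{\mathbf w}$ with $\mathbf u,\mathbf v,\mathbf w$ distinct and no pairwise difference of $\mathbf u,\mathbf v,\mathbf w$ lying in $L$.
   Context: $\mathbb{B}=\{\infty,0\}$ with $\oplus=\min$ and multiplication $+$. For $f=\bigoplus c_{\mathbf u}\mathbf x^{\mathbf u}$, $\operatorname{supp}(f)=\{\mathbf u:c_{\mathbf u}\ne\infty\}$. An ideal $I\subset\mathbb{B}[x_1^{\pm1},\dots,x_n^{\pm1}]$ is a tropical ideal if for all $f,g\in I$ and $\mathbf u\in\operatorname{supp}(f)\cap\operatorname{supp}(g)$ there is $h\in I$ with $\operatorname{supp}(f)\Delta\operatorname{supp}(g)\subset\operatorname{supp}(h)\subset(\operatorname{supp}(f)\cup\operatorname{supp}(g))\setminus\{\mathbf u\}$. Its underlying matroid on $\mathbb{Z}^n$ has as independent sets those containing no support of a polynomial of $I$ (circuits = minimal supports). $I$ is zero-dimensional of degree $r$ iff this matroid has finite rank $r$ (equivalent to the Hilbert-polynomial definition). A polynomial of minimal support is one whose support is a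 circuit of the underlying matroid. *)

From HB Require Import structures.
From mathcomp Require Import all_boot all_order all_algebra.
From mathcomp Require Import finmap.
Set Implicit Arguments. Unset Strict Implicit. Unset Printing Implicit Defensive.
Import Order.TTheory GRing.Theory Num.Theory.
Local Open Scope ring_scope.
Local Open Scope fset_scope.

Definition Zn (n : nat) := 'rV[int]_n.

(* A Laurent polynomial over B = {oo, 0} is  f = (+)_{u in supp f} x^u,
   hence it is identified with its support, a finite subset of Z^n.
   The zero polynomial (constantly oo) is the empty set. *)
Definition bpoly (n : nat) := {fset Zn n}.

Definition badd n (f g : bpoly n) : bpoly n := f `|` g.
Definition bmul n (f g : bpoly n) : bpoly n := [fset (u + v)%R | u in f, v in g].

Definition is_ideal n (I : bpoly n -> Prop) : Prop :=
  I fset0 /\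
  (forall f g, I f -> I g -> I (badd f g)) /\
  (forall f g, I f -> I (bmul g f)).

Definition is_tropical_ideal n (I : bpoly n -> Prop) : Prop :=
  is_ideal I /\
  forall f g u, I f -> I g -> u \in f -> u \in g ->
    exists h, I h /\
      ((f `\` g) `|` (g `\` f)) `<=` h /\ h `<=` ((f `|` g) `\ u).

(* Independent (finite) sets of the underlying matroid: contain no
   support of a nonzero polynomial of I. *)
Definition indep n (I : bpoly n -> Prop) (S : {fset Zn n}) : Prop :=
  forall f, I f -> f != fset0 -> ~ (f `<=` S).

Definition matroid_rank n (I : bpoly n -> Prop) (r : nat) : Prop :=
  (exists S, indep I S /\ #|` S| = r) /\
  (forall S, indep I S -> (#|` S| <= r)%N).

Definition zero_dim_trop_ideal_deg n (I : bpoly n -> Prop) (r : nat) : Prop :=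
  is_tropical_ideal I /\ matroid_rank I r.

Definition min_support n (I : bpoly n -> Prop) (f : bpoly n) : Prop :=
  I f /\ f != fset0 /\
  forall g, I g -> g != fset0 -> g `<=` f -> g = f.

Definition is_sublattice n (L : Zn n -> Prop) : Prop :=
  L 0%R /\ forall u v, L u -> L v -> L (u - v)%R.

Definition is_proper_sublattice n (L : Zn n -> Prop) : Prop :=
  is_sublattice L /\ exists v, ~ L v.

Definition lattice_circuit n (L : Zn n -> Prop) (f : bpoly n) : Prop :=
  (exists u v : Zn n, u != v /\ L (u - v)%R /\ f = [fset u; v]) \/
  (exists u v w : Zn n, [/\ u != v, u != w & v != w] /\
     [/\ ~ L (u - v)%R, ~ L (u - w)%R & ~ L (v - w)%R] /\ f = [fset u; v; w]).

(* A point x of a support S is covered (for L) when S contains an L-circuit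
   through x: a point y <> x congruent to x modulo L (a binomial), or two
   points y, z with x, y, z pairwise incongruent (a trinomial).  I_L is the
   set of supports all of whose points are covered, i.e. unions of circuits.

   First, for any sublattice L: I_L is an ideal, since circuits are
   translation invariant; it satisfies monomial elimination, the eliminant
   being the set of covered points of (f ∪ g) \ u, which contains every
   point of the symmetric difference because replacing u by a circuit
   through u yields a circuit avoiding u; its polynomials of minimal support
   are exactly the binomials and trinomials above; its matroid has rank 2
   when L is proper; and L is recovered from the binomials of I_L.

   Second, for a zero-dimensional tropical ideal I of degree 2: I contains
   no monomial, so binomials of I form an equivalence relation (transitivity
   is elimination) whose class of 0 is a proper lattice L_I.  Pairwise
   unrelated triples carry trinomials of I by the rank bound, whence
   I_(L_I) ⊆ I; an induction eliminating points of a support shows that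
   every point of a member of I is covered, whence I ⊆ I_(L_I). *)

From HB Require Import structures.
From mathcomp Require Import all_boot all_order all_algebra.
From mathcomp Require Import finmap.
From Stdlib Require Import Classical ClassicalEpsilon.
Set Implicit Arguments. Unset Strict Implicit. Unset Printing Implicit Defensive.
Import Order.TTheory GRing.Theory Num.Theory.
Local Open Scope fset_scope.
Local Open Scope ring_scope.

Section FiniteSets.
Variable K : choiceType.
Implicit Types (S : {fset K}) (x y z : K).

Lemma fset_nonempty S x : x \in S -> S != fset0.
Proof. by move=> xS; apply/eqP => S0; rewrite S0 inE in xS. Qed.

Lemma fset_memP S : S != fset0 -> exists x, x \in S.
Proof. by case: (fset_0Vmem S) => [->|[x xS]]; [rewrite eqxx | exists x]. Qed.

Lemma fsub2 S x y : x \in S -> y \in S -> [fset x; y] `<=` S.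
Proof. by move=> xS yS; apply/fsubsetP => t; rewrite !inE => /orP [] /eqP ->. Qed.

Lemma fsub3 S x y z : x \in S -> y \in S -> z \in S -> [fset x; y; z] `<=` S.
Proof.
by move=> xS yS zS; apply/fsubsetP => t; rewrite !inE => /orP [/orP []|] /eqP ->.
Qed.

Lemma mem_fset2 t x y : t \in [fset x; y] -> t = x \/ t = y.
Proof. by rewrite !inE => /orP [] /eqP ->; [left | right]. Qed.

Lemma mem_fset3 t x y z : t \in [fset x; y; z] -> [\/ t = x, t = y | t = z].
Proof.
by rewrite !inE => /orP [/orP []|] /eqP ->; [constructor 1|constructor 2|constructor 3].
Qed.

Lemma card2_le S x y : x \in S -> y \in S -> x != y -> (2 <= #|` S|)%N.
Proof.
by move=> xS yS xy; have := fsubset_leq_card (fsub2 xS yS); rewrite cardfs2 xy.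
Qed.

Lemma card3_le S x y z : x \in S -> y \in S -> z \in S ->
  x != y -> x != z -> y != z -> (3 <= #|` S|)%N.
Proof.
move=> xS yS zS xy xz yz.
rewrite (cardfsD1 x) xS (cardfsD1 y) (cardfsD1 z).
by rewrite !in_fsetD1 yS zS eq_sym xy eq_sym yz eq_sym xz.
Qed.

Lemma card_fset3 x y z : (#|` [fset x; y; z]| <= 3)%N.
Proof.
rewrite cardfsU cardfs1 cardfs2; apply: leq_trans (leq_subr _ _) _.
by case: (x != y).
Qed.

Lemma pick2 S : (2 <= #|` S|)%N -> exists x y, [/\ x \in S, y \in S & x != y].
Proof.
move=> cS; have [x xS] : exists x, x \in S.
  by apply: fset_memP; rewrite -cardfs_gt0; apply: leq_trans cS.
move: cS; rewrite (cardfsD1 x) xS ltnS => cS.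
have [y] : exists y, y \in S `\ x by apply: fset_memP; rewrite -cardfs_gt0.
by rewrite in_fsetD1 => /andP [yx yS]; exists x, y; rewrite eq_sym.
Qed.

Lemma pick3 S : (3 <= #|` S|)%N ->
  exists x y z, [/\ x \in S, y \in S, z \in S, x != y & x != z /\ y != z].
Proof.
move=> cS; have [x xS] : exists x, x \in S.
  by apply: fset_memP; rewrite -cardfs_gt0; apply: leq_trans cS.
move: cS; rewrite (cardfsD1 x) xS ltnS => /pick2 [y [z [yS zS yz]]].
move: yS zS; rewrite !in_fsetD1 => /andP [yx yS] /andP [zx zS].
by exists x, y, z; rewrite ![x == _]eq_sym yx zx.
Qed.

End FiniteSets.

Section Congruence.
Variables (n : nat) (L : Zn n -> Prop).
Hypothesis HL : is_sublattice L.

Lemma lattice_refl x : L (x - x).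
Proof. by rewrite subrr; exact: HL.1. Qed.

Lemma lattice_sym x y : L (x - y) -> L (y - x).
Proof. by move=> Lxy; have := HL.2 _ _ HL.1 Lxy; rewrite sub0r opprB. Qed.

Lemma lattice_trans x y z : L (x - y) -> L (y - z) -> L (x - z).
Proof.
move=> Lxy /lattice_sym Lzy; have := HL.2 _ _ Lxy Lzy.
by rewrite opprB addrA subrK.
Qed.

Lemma lattice_nsym x y : ~ L (x - y) -> ~ L (y - x).
Proof. by move=> nLxy /lattice_sym. Qed.

Lemma lattice_neq x y : ~ L (x - y) -> x != y.
Proof.
by move=> nLxy; apply/eqP => xy; apply: nLxy; rewrite xy; exact: lattice_refl.
Qed.

End Congruence.

Definition covered n (L : Zn n -> Prop) (S : bpoly n) (x : Zn n) : Prop :=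
  (exists y, [/\ y \in S, y != x & L (x - y)]) \/
  (exists y z, [/\ y \in S, z \in S, ~ L (x - y), ~ L (x - z) & ~ L (y - z)]).

(* The candidate ideal I_L: supports all of whose points are covered,
   i.e. unions of L-circuits. *)
Definition lattice_ideal n (L : Zn n -> Prop) (f : bpoly n) : Prop :=
  forall x, x \in f -> covered L f x.

Definition coveredb n (L : Zn n -> Prop) (S : bpoly n) (x : Zn n) : bool :=
  if excluded_middle_informative (covered L S x) then true else false.

Lemma coveredbP n (L : Zn n -> Prop) S x : reflect (covered L S x) (coveredb L S x).
Proof. by rewrite /coveredb; case: excluded_middle_informative => h; constructor. Qed.

Section LatticeIdeal.
Variables (n : nat) (L : Zn n -> Prop).
Hypothesis HL : is_sublattice L.
Implicit Types (f g S T : bpoly n) (a b t u v w x y z : Zn n).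

Lemma covered_sub S T x : covered L S x -> S `<=` T -> covered L T x.
Proof.
move=> [[y [yS yx Lxy]]|[y [z [yS zS h1 h2 h3]]]] /fsubsetP ST.
  by left; exists y; split => //; apply: ST.
by right; exists y, z; split => //; apply: ST.
Qed.

(* Circuits are translation invariant, so covering survives multiplication
   by any polynomial. *)
Lemma covered_bmul g S a x : a \in g -> covered L S x -> covered L (bmul g S) (a + x).
Proof.
move=> ag.
have shift y z : (a + y) - (a + z) = y - z by rewrite [a + y]addrC addrKA.
have inM y : y \in S -> a + y \in bmul g S by move=> yS; apply: in_imfset2.
move=> [[y [yS yx Lxy]]|[y [z [yS zS h1 h2 h3]]]].
  left; exists (a + y); rewrite shift inM //; split => //.
  by apply: contra yx => /eqP /addrI ->.
by right; exists (a + y), (a + z); rewrite !shift !inM.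
Qed.

Lemma lattice_ideal_is_ideal : is_ideal (lattice_ideal L).
Proof.
split; first by move=> x; rewrite inE.
split=> [f g Hf Hg x|f g Hf t /imfset2P [a ag [x xf ->]]].
  rewrite /badd inE => /orP [xf|xg].
    exact: covered_sub (Hf x xf) (fsubsetUl _ _).
  exact: covered_sub (Hg x xg) (fsubsetUr _ _).
exact: covered_bmul (Hf x xf).
Qed.

(* Monomial elimination, point by point.  Let x lie on a circuit of f
   through u, and let u be covered in g, which avoids x.  Replacing u by
   the circuit of g through u yields a circuit through x avoiding u. *)
Lemma covered_via_congruent g u x :
  L (x - u) -> x \notin g -> covered L g u -> covered L (g `\ u) x.
Proof.
move=> Lxu xg [[z [zg zu Luz]]|[z [w [zg wg n1 n2 n3]]]].
  left; exists z; split; first by rewrite in_fsetD1 zu.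
    by apply: contraNneq xg => <-.
  exact: lattice_trans Lxu Luz.
have Lux := lattice_sym HL Lxu.
right; exists z, w; split => //.
- by rewrite in_fsetD1 zg eq_sym (lattice_neq HL n1).
- by rewrite in_fsetD1 wg eq_sym (lattice_neq HL n2).
- by move=> Lxz; apply: n1; apply: lattice_trans Lux Lxz.
- by move=> Lxw; apply: n2; apply: lattice_trans Lux Lxw.
Qed.

(* Same when x, u and a third point z of f are pairwise incongruent: the
   circuit of g through u, together with z, provides a circuit through x. *)
Lemma covered_via_incongruent g u x z :
  ~ L (x - u) -> ~ L (x - z) -> ~ L (u - z) -> x \notin g -> covered L g u ->
  covered L (z |` (g `\ u)) x.
Proof.
move=> nxu nxz nuz xg [[w [wg wu Luw]]|[v [w [vg wg n1 n2 n3]]]].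
  right; exists z, w; split => //.
  - by rewrite fset1U1.
  - by rewrite fset1Ur // in_fsetD1 wu.
  - by move=> Lxw; apply: nxu; apply: lattice_trans Lxw (lattice_sym HL Luw).
  - by move=> Lzw; apply: nuz; apply: lattice_trans Luw (lattice_sym HL Lzw).
have inG t : t \in g -> ~ L (u - t) -> t \in z |` (g `\ u).
  by move=> tg nut; rewrite fset1Ur // in_fsetD1 tg eq_sym (lattice_neq HL nut).
case: (classic (L (x - v))) => Lxv.
  by left; exists v; split; [exact: inG | apply: contraNneq xg => <- |].
case: (classic (L (x - w))) => Lxw.
  by left; exists w; split; [exact: inG | apply: contraNneq xg => <- |].
by right; exists v, w; split; try exact: inG.
Qed.

(* Every point of f \ g is covered in (f ∪ g) \ u: its circuit in f
   either avoids u or is rerouted through g by the two lemmas above. *)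
Lemma covered_elim f g u x : lattice_ideal L f -> lattice_ideal L g ->
  u \in f -> u \in g -> x \in f -> x \notin g -> covered L ((f `|` g) `\ u) x.
Proof.
move=> Hf Hg uf ug xf xg.
have inS t : t \in f -> t != u -> t \in (f `|` g) `\ u.
  by move=> tf tu; rewrite in_fsetD1 tu in_fsetU tf.
have subG : g `\ u `<=` (f `|` g) `\ u by apply: fsetSD; exact: fsubsetUr.
have subZ z : z \in f -> ~ L (u - z) -> z |` (g `\ u) `<=` (f `|` g) `\ u.
  move=> zf nuz; rewrite fsubUset subG fsub1set andbT.
  by rewrite inS // eq_sym (lattice_neq HL nuz).
case: (Hf x xf) => [[y [yf yx Lxy]]|[y [z [yf zf n1 n2 n3]]]].
  have [yu|yu] := eqVneq y u.
    subst y; apply: covered_sub subG.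
    exact: covered_via_congruent Lxy xg (Hg u ug).
  by left; exists y; split => //; exact: inS.
have [yu|yu] := eqVneq y u.
  subst y; apply: covered_sub (subZ z zf n3).
  exact: covered_via_incongruent n1 n2 n3 xg (Hg u ug).
have [zu|zu] := eqVneq z u.
  subst z; apply: covered_sub (subZ y yf (lattice_nsym HL n3)).
  exact: covered_via_incongruent n2 n1 (lattice_nsym HL n3) xg (Hg u ug).
by right; exists y, z; split => //; exact: inS.
Qed.

(* The covered points of any S form a member of I_L: the partners of a
   covered point are covered through it. *)
Definition covered_part (S : bpoly n) : bpoly n := [fset x in S | coveredb L S x].

Lemma mem_covered_part S x : x \in covered_part S <-> x \in S /\ covered L S x.
Proof. by rewrite !inE; split => [/andP [-> /coveredbP]|[-> /coveredbP]]. Qed.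

Lemma covered_part_ideal S : lattice_ideal L (covered_part S).
Proof.
move=> x /mem_covered_part [xS [[y [yS yx Lxy]]|[y [z [yS zS n1 n2 n3]]]]].
  left; exists y; split => //; apply/mem_covered_part; split => //.
  by left; exists x; split; rewrite 1?eq_sym //; exact: lattice_sym.
right; exists y, z; split => //; apply/mem_covered_part; split => //.
  by right; exists x, z; split => //; exact: lattice_nsym.
by right; exists x, y; split => //; exact: lattice_nsym.
Qed.

Lemma lattice_ideal_tropical : is_tropical_ideal (lattice_ideal L).
Proof.
split; first exact: lattice_ideal_is_ideal.
move=> f g u Hf Hg uf ug; exists (covered_part ((f `|` g) `\ u)).
split; first exact: covered_part_ideal.
split; last by apply/fsubsetP => x /mem_covered_part [].
apply/fsubsetP => x; rewrite in_fsetU !in_fsetD => /orP [/andP [xg xf]|/andP [xf xg]].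
  apply/mem_covered_part; split; last exact: covered_elim.
  by rewrite in_fsetD1 in_fsetU xf (contraNneq _ xg) // => ->.
apply/mem_covered_part; rewrite fsetUC; split; last exact: covered_elim.
by rewrite in_fsetD1 in_fsetU xg (contraNneq _ xf) // => ->.
Qed.

Lemma binomial_ideal x y : x != y -> L (x - y) -> lattice_ideal L [fset x; y].
Proof.
move=> xy Lxy t /mem_fset2 [->|->]; left.
  by exists y; rewrite !inE eqxx orbT eq_sym.
by exists x; rewrite !inE eqxx; split=> //; exact: lattice_sym.
Qed.

Lemma trinomial_ideal x y z : ~ L (x - y) -> ~ L (x - z) -> ~ L (y - z) ->
  lattice_ideal L [fset x; y; z].
Proof.
move=> n1 n2 n3 t /mem_fset3 [->|->|->]; right.
- by exists y, z; rewrite !inE !eqxx !orbT.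
- by exists x, z; rewrite !inE !eqxx !orbT; split => //; exact: lattice_nsym.
- by exists x, y; rewrite !inE !eqxx !orbT; split => //; exact: lattice_nsym.
Qed.

Lemma covered_cases S x : x \in S -> covered L S x ->
  (exists2 y, y \in S & y != x /\ L (x - y)) \/ (3 <= #|` S|)%N.
Proof.
move=> xS [[y [yS yx Lxy]]|[y [z [yS zS n1 n2 n3]]]]; first by left; exists y.
by right; exact: card3_le xS yS zS (lattice_neq HL n1) (lattice_neq HL n2) (lattice_neq HL n3).
Qed.

Lemma lattice_ideal_pair_sub f a b :
  lattice_ideal L f -> f != fset0 -> f `<=` [fset a; b] -> L (a - b).
Proof.
move=> Hf /fset_memP [x xf] fab.
have inab t : t \in f -> t = a \/ t = b by move/(fsubsetP fab)/mem_fset2.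
case: (covered_cases xf (Hf x xf)) => [[y yf [yx Lxy]]|c3].
  case: (inab x xf) (inab y yf) => ex [] ey; subst x y; rewrite ?eqxx // in yx.
  exact: lattice_sym.
have := leq_trans c3 (fsubset_leq_card fab).
by rewrite cardfs2; case: (a != b).
Qed.

Lemma triple_incongruent u v w x y : ~ L (u - v) -> ~ L (u - w) -> ~ L (v - w) ->
  x \in [fset u; v; w] -> y \in [fset u; v; w] -> x != y -> ~ L (x - y).
Proof.
move=> n1 n2 n3 /mem_fset3 [] -> /mem_fset3 [] ->; rewrite ?eqxx //;
  by move=> _; try apply: lattice_nsym.
Qed.

Lemma three_points_circuit x y z : x != y -> x != z -> y != z ->
  exists2 f, lattice_ideal L f & f != fset0 /\ f `<=` [fset x; y; z].
Proof.
move=> xy xz yz.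
have nz t : t \in [fset x; y; z] -> [fset x; y; z] != fset0 by exact: fset_nonempty.
have sub2 a b : a \in [fset x; y; z] -> b \in [fset x; y; z] -> a != b -> L (a - b) ->
    exists2 f, lattice_ideal L f & f != fset0 /\ f `<=` [fset x; y; z].
  move=> aS bS ab Lab; exists [fset a; b]; first exact: binomial_ideal.
  by split; [exact: fset_nonempty (fset1U1 _ _) | exact: fsub2].
have xS : x \in [fset x; y; z] by rewrite !inE eqxx.
have yS : y \in [fset x; y; z] by rewrite !inE eqxx orbT.
have zS : z \in [fset x; y; z] by rewrite !inE eqxx orbT.
case: (classic (L (x - y))) => [|n1]; first exact: sub2.
case: (classic (L (x - z))) => [|n2]; first exact: sub2.
case: (classic (L (y - z))) => [|n3]; first exact: sub2.
by exists [fset x; y; z]; [exact: trinomial_ideal | split; [exact: nz xS|]].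
Qed.

(* For a proper sublattice the matroid of I_L has rank 2: a pair {0, v}
   with v outside L is independent, and any three points carry a circuit. *)
Lemma lattice_ideal_rank : (exists v, ~ L v) -> matroid_rank (lattice_ideal L) 2.
Proof.
move=> [v nLv]; split.
  exists [fset 0; v]; split.
    move=> f Hf f0 fS; apply: nLv.
    by have := lattice_sym HL (lattice_ideal_pair_sub Hf f0 fS); rewrite subr0.
  rewrite cardfs2; case: eqP => // v0.
  by case: nLv; rewrite -v0; exact: HL.1.
move=> S indS; rewrite leqNgt; apply/negP => /pick3 [x [y [z [xS yS zS xy [xz yz]]]]].
have [f Hf [f0 fS]] := three_points_circuit xy xz yz.
by apply: (indS f Hf f0); apply: fsubset_trans fS (fsub3 xS yS zS).
Qed.

Lemma lattice_ideal_circuits f : min_support (lattice_ideal L) f <-> lattice_circuit L f.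
Proof.
split.
  move=> [Hf [/fset_memP [x xf] fmin]].
  case: (Hf x xf) => [[y [yf yx Lxy]]|[y [z [yf zf n1 n2 n3]]]].
    left; exists x, y; rewrite eq_sym; do 2!split => //.
    symmetry; apply: fmin (fsub2 xf yf); first by apply: binomial_ideal; rewrite // eq_sym.
    exact: fset_nonempty (fset1U1 _ _).
  right; exists x, y, z; split.
    by split; [exact: (lattice_neq HL n1)|exact: (lattice_neq HL n2)|exact: (lattice_neq HL n3)].
  split=> //; symmetry; apply: fmin (fsub3 xf yf zf); first exact: trinomial_ideal.
  by apply: (@fset_nonempty _ _ x); rewrite !inE eqxx.
case=> [[u [v [uv [Luv ->]]]]|[u [v [w [[uv uw vw] [[n1 n2 n3] ->]]]]]].
  split; first exact: binomial_ideal.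
  split; first exact: fset_nonempty (fset1U1 _ _).
  move=> g Hg /fset_memP [x xg] gS; apply/eqP; rewrite eqEfcard gS cardfs2 uv /=.
  case: (covered_cases xg (Hg x xg)) => [[y yg [yx _]]|]; last exact: leq_trans.
  exact: card2_le yg xg yx.
split; first exact: trinomial_ideal.
split; first by apply: (@fset_nonempty _ _ u); rewrite !inE eqxx.
move=> g Hg /fset_memP [x xg] gS; apply/eqP; rewrite eqEfcard gS /=.
case: (covered_cases xg (Hg x xg)) => [[y yg [yx Lxy]]|c3].
  by case: (triple_incongruent n1 n2 n3 (fsubsetP gS x xg) (fsubsetP gS y yg) _ Lxy);
    rewrite eq_sym.
exact: leq_trans (card_fset3 u v w) c3.
Qed.

End LatticeIdeal.

(* L is recovered from I_L through its binomials x^v + x^0. *)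
Lemma lattice_ideal_inj n (L1 L2 : Zn n -> Prop) :
  is_sublattice L1 -> is_sublattice L2 ->
  (forall f, lattice_ideal L1 f <-> lattice_ideal L2 f) -> forall v, L1 v -> L2 v.
Proof.
move=> HL1 HL2 E v L1v; have [->|v0] := eqVneq v 0; first exact: HL2.1.
have /E H2 : lattice_ideal L1 [fset v; 0] by apply: binomial_ideal; rewrite ?subr0.
have := lattice_ideal_pair_sub HL2 H2 (fset_nonempty (fset1U1 _ _)) (fsubset_refl _).
by rewrite subr0.
Qed.

Lemma ideal_local n (I : bpoly n -> Prop) (f : bpoly n) : is_ideal I ->
  (forall x, x \in f -> exists2 c, I c & x \in c /\ c `<=` f) -> I f.
Proof.
move=> [I0 [IU _]] cover.
have grow (s : seq (Zn n)) : {subset s <= f} ->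
    exists2 h, I h & {subset s <= h} /\ h `<=` f.
  elim: s => [|x s IH] sf; first by exists fset0; rewrite ?fsub0set.
  have [h Ih [sh hf]] := IH (fun t ts => sf t (@mem_behead _ (x :: s) t ts)).
  have [c Ic [xc cf]] := cover x (sf x (mem_head x s)).
  exists (h `|` c); first exact: IU.
  split; last by rewrite fsubUset hf cf.
  by move=> t; rewrite inE in_fsetU => /orP [/eqP ->|/sh ->]; rewrite ?xc ?orbT.
have [h Ih [fh hf]] := grow (enum_fset f) (fun t => id).
suff -> : f = h by [].
by apply/eqP; rewrite eqEfsubset hf andbT; apply/fsubsetP => t /fh.
Qed.

Lemma bmul_monomial n (c : Zn n) (g : bpoly n) :
  bmul [fset c] g = [fset c + t | t in g].
Proof.
apply/fsetP => t; apply/imfset2P/imfsetP => [[a]|[x xg ->]].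
  by rewrite inE => /eqP -> [x xg ->]; exists x.
by exists c; rewrite ?inE //; exists x.
Qed.

Section ZeroDimDegreeTwo.
Variables (n : nat) (I : bpoly n -> Prop).
Hypothesis HI : zero_dim_trop_ideal_deg I 2.
Implicit Types (f g h : bpoly n) (a b c t u v x y z : Zn n).

Let I_ideal : is_ideal I := HI.1.1.
Let I_elim := HI.1.2.
Let I_rank : matroid_rank I 2 := HI.2.

Lemma ideal_translate c g : I g -> I [fset c + t | t in g].
Proof. by rewrite -bmul_monomial; apply: I_ideal.2.2. Qed.

(* I contains no monomial: otherwise, translating it, no point would be
   independent, while the rank is 2. *)
Lemma no_monomial a : ~ I [fset a].
Proof.
move=> Ia; have [[S [indS cS]] _] := I_rank.
have [b bS] : exists b, b \in S by apply: fset_memP; rewrite -cardfs_gt0 cS.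
have := ideal_translate (b - a) Ia; rewrite imfset_fset1 subrK => Ib.
by apply: (indS _ Ib (fset_nonempty (fset11 b))); rewrite fsub1set.
Qed.

Definition related x y : Prop := x = y \/ I [fset x; y].

Definition ideal_lattice v : Prop := related v 0.

Lemma related_diff x y : ideal_lattice (x - y) <-> related x y.
Proof.
split=> [[/eqP|Ixy]|[->|Ixy]]; first by rewrite subr_eq0 => /eqP ->; left.
- by right; have := ideal_translate y Ixy; rewrite imfset_fset2 addr0 addrC subrK.
- by left; rewrite subrr.
- by right; have := ideal_translate (- y) Ixy; rewrite imfset_fset2 addNr addrC.
Qed.

Lemma related_sym x y : related x y -> related y x.
Proof. by case=> [->|Ixy]; [left | right; rewrite fsetUC]. Qed.

(* Transitivity is monomial elimination: eliminating y from the binomials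
   {x, y} and {y, z} leaves a member of I that contains the symmetric
   difference {x, z} and is contained in {x, z}. *)
Lemma related_trans x y z : related x y -> related y z -> related x z.
Proof.
case=> [->//|Ixy]; case=> [<-|Iyz]; first by right.
have [->|xz] := eqVneq x z; first by left.
have [->|xy] := eqVneq x y; first by right.
have [<-|yz] := eqVneq y z; first by right.
have yxy : y \in [fset x; y] by rewrite !inE eqxx orbT.
have [h [Ih [hmin hmax]]] := I_elim Ixy Iyz yxy (fset1U1 y _).
right; suff -> : [fset x; z] = h by [].
apply/eqP; rewrite eqEfsubset; apply/andP; split.
  apply: fsub2; apply: (fsubsetP hmin); rewrite !inE !eqxx /= ?orbT.
    by rewrite (negbTE xy) (negbTE xz).
  by rewrite eq_sym (negbTE xz) eq_sym (negbTE yz).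
apply/fsubsetP => t /(fsubsetP hmax); rewrite !inE => /andP [ty].
by rewrite (negbTE ty) /= ?orbF => /orP [] ->; rewrite ?orbT.
Qed.

Lemma ideal_lattice_sublattice : is_sublattice ideal_lattice.
Proof.
split; first by left.
move=> u v Lu Lv; apply/related_diff; apply: related_trans Lu _.
exact: related_sym.
Qed.

(* L_I is proper: two independent points are not related. *)
Lemma ideal_lattice_proper : is_proper_sublattice ideal_lattice.
Proof.
split; first exact: ideal_lattice_sublattice.
have [[S [indS cS]] _] := I_rank.
have [a [b [aS bS ab]]] := pick2 (eq_leq (esym cS)).
exists (a - b) => /related_diff [eab|Iab]; first by rewrite eab eqxx in ab.
exact: indS Iab (fset_nonempty (fset1U1 _ _)) (fsub2 aS bS).
Qed.

Lemma ideal_pair_sub g b c : I g -> g != fset0 -> g `<=` [fset b; c] -> I [fset b; c].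
Proof.
move=> Ig g0 gbc; have inbc t : t \in g -> t = b \/ t = c.
  by move/(fsubsetP gbc)/mem_fset2.
have monomial a : g `<=` [fset a] -> False.
  by rewrite fsubset1 (negbTE g0) orbF => /eqP ga; apply: (@no_monomial a); rewrite -ga.
case: (boolP (b \in g)) => bg; last first.
  by exfalso; apply: (monomial c); apply/fsubsetP => t tg; case: (inbc t tg) => e;
    [subst t; rewrite tg in bg | rewrite e fset11].
case: (boolP (c \in g)) => cg; last first.
  by exfalso; apply: (monomial b); apply/fsubsetP => t tg; case: (inbc t tg) => e;
    [rewrite e fset11 | subst t; rewrite tg in cg].
suff <- : g = [fset b; c] by [].
by apply/eqP; rewrite eqEfsubset gbc fsub2.
Qed.

(* Core of I ⊆ I_(L_I).  Suppose x lies in g ∈ I, is related to no other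
   point of g, while the other points of g are pairwise related.  Then
   eliminating any z ≠ x of g against a binomial {y, z} keeps x and shrinks
   g, until g is a monomial or the binomial {x, y}: impossible. *)
Lemma uncovered_absurd x k g : (#|` g| <= k)%N -> I g -> x \in g ->
  (forall y, y \in g -> y != x -> ~ I [fset x; y]) ->
  {in g `\ x &, forall y z, related y z} -> False.
Proof.
elim: k g => [|k IH] g cg Ig xg nox rel; first by move: cg; rewrite (cardfsD1 x) xg.
have [c2|c1] := leqP 2 #|` g `\ x|.
  have [y [z [yg zg yz]]] := pick2 c2.
  have Iyz : I [fset y; z] by case: (rel y z yg zg) => // e; rewrite e eqxx in yz.
  move: yg zg; rewrite !in_fsetD1 => /andP [yx yg] /andP [zx zg].
  have zyz : z \in [fset y; z] by rewrite !inE eqxx orbT.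
  have [h [Ih [hmin hmax]]] := I_elim Ig Iyz zg zyz.
  have hg : h `<=` g `\ z.
    apply/fsubsetP => t /(fsubsetP hmax); rewrite !in_fsetD1 in_fsetU => /andP [tz].
    by rewrite tz => /orP [//|/mem_fset2 [ty|e]]; [rewrite ty | rewrite e eqxx in tz].
  have xh : x \in h.
    by apply: (fsubsetP hmin); rewrite in_fsetU in_fsetD xg !inE ![x == _]eq_sym
      (negbTE yx) (negbTE zx).
  have hsub t : t \in h -> t \in g by move/(fsubsetP hg); rewrite in_fsetD1 => /andP [].
  apply: (IH h) => //.
  - move: cg (fsubset_leq_card hg); rewrite (cardfsD1 z) zg add1n ltnS.
    by move=> cg ch; exact: leq_trans ch cg.
  - by move=> t /hsub; apply: nox.
  - by move=> t u; rewrite !in_fsetD1 => /andP [tx /hsub tg] /andP [ux /hsub ug];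
      apply: rel; rewrite in_fsetD1 ?tx ?ux.
move: c1; rewrite ltnS leq_eqVlt ltnS leqn0 => /orP [/cardfs1P [y gy]|/eqP/cardfs0_eq g0].
  have /andP [yx yg] : (y != x) && (y \in g) by rewrite -in_fsetD1 gy fset11.
  have gxy : g = [fset x; y] by rewrite -{1}(fsetD1K xg) gy.
  by apply: (nox y yg yx); rewrite -gxy.
have gx : g = [fset x] by rewrite -{1}(fsetD1K xg) g0 fsetU0.
by apply: (@no_monomial x); rewrite -gx.
Qed.

Lemma ideal_covered f : I f -> lattice_ideal ideal_lattice f.
Proof.
move=> If x xf; apply: NNPP => ncov.
have nrel y : y \in f -> y != x -> ~ ideal_lattice (x - y).
  move=> yf yx Lxy; apply: ncov; left; exists y; split => //.
apply: (uncovered_absurd (k := #|` f|) (leqnn _) If xf).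
  by move=> y yf yx Ixy; apply: (nrel y yf yx); apply/related_diff; right.
move=> y z; rewrite !in_fsetD1 => /andP [yx yf] /andP [zx zf].
apply: NNPP => nyz; apply: ncov; right; exists y, z; split => //.
- exact: nrel.
- exact: nrel.
- by move/related_diff.
Qed.

(* Pairwise unrelated points x, y, z carry a trinomial of I: by the rank
   bound they support a nonempty member of I, which cannot avoid any of
   them, since it would then be a binomial or a monomial. *)
Lemma trinomial_in_ideal x y z :
  ~ ideal_lattice (x - y) -> ~ ideal_lattice (x - z) -> ~ ideal_lattice (y - z) ->
  I [fset x; y; z].
Proof.
move=> n1 n2 n3; have HL := ideal_lattice_sublattice.
have c3 : (3 <= #|` [fset x; y; z]|)%N.
  apply: (card3_le _ _ _ (lattice_neq HL n1) (lattice_neq HL n2) (lattice_neq HL n3));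
  by rewrite !inE eqxx ?orbT.
have [g [Ig [g0 gS]]] : exists g, I g /\ g != fset0 /\ g `<=` [fset x; y; z].
  apply: NNPP => none; suff /(I_rank.2 _) : indep I [fset x; y; z] by move/(leq_trans c3).
  by move=> g Ig g0 gS; apply: none; exists g.
have miss a b : ~ ideal_lattice (a - b) -> ~ (g `<=` [fset a; b]).
  by move=> nab /(ideal_pair_sub Ig g0) Iab; apply/nab/related_diff; right.
have inS t : t \in g -> t = x \/ t = y \/ t = z.
  by move/(fsubsetP gS)/mem_fset3 => [] ->; tauto.
have drop c a b : ~ ideal_lattice (a - b) ->
    (forall t, t \in g -> t = c \/ t = a \/ t = b) -> c \in g.
  move=> nab cab; apply: NNPP => /negP cg; apply: (miss _ _ nab).
  apply/fsubsetP => t tg; have tc : t != c by apply: contraNneq cg => <-.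
  by case: (cab t tg) => [e|[->|->]];
    [rewrite e eqxx in tc | rewrite fset1U1 | rewrite !inE eqxx orbT].
have xg : x \in g by apply: (drop _ _ _ n3) => t /inS; tauto.
have yg : y \in g by apply: (drop _ _ _ n2) => t /inS; tauto.
have zg : z \in g by apply: (drop _ _ _ n1) => t /inS; tauto.
suff <- : g = [fset x; y; z] by [].
by apply/eqP; rewrite eqEfsubset gS fsub3.
Qed.

Lemma lattice_ideal_in_ideal f : lattice_ideal ideal_lattice f -> I f.
Proof.
move=> Hf; apply: ideal_local I_ideal _ => x xf.
case: (Hf x xf) => [[y [yf yx Lxy]]|[y [z [yf zf n1 n2 n3]]]].
  case/related_diff: Lxy => [exy|Ixy]; first by rewrite exy eqxx in yx.
  by exists [fset x; y] => //; split; [exact: fset1U1 | exact: fsub2].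
exists [fset x; y; z]; first exact: trinomial_in_ideal.
by split; [rewrite !inE eqxx | exact: fsub3].
Qed.

End ZeroDimDegreeTwo.

Theorem mainTheorem5 (n : nat) :
  exists Phi : (Zn n -> Prop) -> (bpoly n -> Prop),
    (forall L, is_proper_sublattice L ->
       zero_dim_trop_ideal_deg (Phi L) 2 /\
       (forall f, min_support (Phi L) f <-> lattice_circuit L f)) /\
    (forall L1 L2, is_proper_sublattice L1 -> is_proper_sublattice L2 ->
       (forall f, Phi L1 f <-> Phi L2 f) -> forall v, L1 v <-> L2 v) /\
    (forall I, zero_dim_trop_ideal_deg I 2 ->
       exists L, is_proper_sublattice L /\ forall f, Phi L f <-> I f).
Proof.
exists (@lattice_ideal n); split; last split.
- move=> L [HL properL]; split; first split.
  + exact: lattice_ideal_tropical.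
  + exact: lattice_ideal_rank.
  + exact: lattice_ideal_circuits.
- move=> L1 L2 [HL1 _] [HL2 _] E v; split.
  + exact: lattice_ideal_inj E v.
  + by apply: lattice_ideal_inj => // f; rewrite E.
- move=> I HI; exists (ideal_lattice I); split; first exact: ideal_lattice_proper.
  by split; [exact: lattice_ideal_in_ideal | exact: ideal_covered].
Qed.
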